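(* Let $1\leq p\leq q$ be integers. Then $K_{p,q}$ is strong $p$-cop-win, and it is not strong $k$-cop-win for any $1\leq k\leq p-1$. Furthermore, $$\lim_{m\to\infty}\mathrm{capt}_p(K_{p,q},m)=\begin{cases}2\lceil q/p\rceil-2, & q>p,\\ 1, & q=p.\end{cases}$$
   Context: $K_{p,q}$ is the complete bipartite graph with parts of sizes $p$ and $q$. All graphs are reflexive (a player may stay in place). The game of $k$ cops and $m$ robbers on $G$: in round 0 the cops first choose starting vertices, then the robbers choose theirs. In each round $i\geq 1$, all $k$ cops move (each to an adjacent vertex or staying), then all $m$ robbers move likewise. Several players may occupy the same vertex. Whenever a cop and some robbers occupy the same vertex, those robbers are captured and take no further part in the game. Both sides have full information. The cops win if all robbers are captured after finitely many rounds. $G$ is $k$-cop-win if $k$ cops can always win against one robber. For a $k$-cop-win graph $G$, $\mathrm{capt}_k(G,m)$ is the index of the round in which the last robber is captured when $k$ cops play to minimize this index and $m$ robbers play to maximize it. $G$ is strong $k$-cop-win if $\lim_{m\to\infty}\mathrm{capt}_k(G,m)$ exists (and is finite). *)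

From mathcomp Require Import all_boot.
Set Implicit Arguments. Unset Strict Implicit. Unset Printing Implicit Defensive.

Section Game.
Variables (V : finType) (e : rel V).

Definition step (x y : V) : bool := (x == y) || e x y.

Variables (k m : nat).

Definition copsT := {ffun 'I_k -> V}.
(* robber j is at vertex v (Some v) or already captured (None) *)
Definition robsT := {ffun 'I_m -> option V}.

Definition capture (c : copsT) (r : robsT) : robsT :=
  [ffun j => match r j with
             | Some v => if [exists i, c i == v] then None else Some v
             | None => None end].

Definition all_captured (r : robsT) : Prop := forall j, r j = None.

Definition cops_move (c c' : copsT) : Prop := forall i, step (c i) (c' i).

Definition robs_move (r r' : robsT) : Prop :=
  forall j, match r j, r' j return Prop with
            | Some v, Some w => step v w
            | None, None => True
            | _, _ => False end.

(* win n c r : with cops at c and (surviving) robbers at r, at the end of a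
   round, the cops can ensure that all robbers are captured within the next
   n rounds, whatever the robbers do. *)
Fixpoint win (n : nat) (c : copsT) (r : robsT) : Prop :=
  match n with
  | 0 => all_captured r
  | n'.+1 => exists c' : copsT, cops_move c c' /\
       forall r' : robsT, robs_move (capture c' r) r' ->
         win n' c' (capture c' r')
  end.

(* the cops can ensure that the last robber is captured in round <= n
   (round 0 = placement: cops first, then robbers) *)
Definition can_win_by (n : nat) : Prop :=
  exists c0 : copsT, forall r0 : {ffun 'I_m -> V},
    win n c0 (capture c0 [ffun j => Some (r0 j)]).

Definition capt_is (t : nat) : Prop :=
  can_win_by t /\ forall n, can_win_by n -> t <= n.

End Game.

Definition cop_win (V : finType) (e : rel V) (k : nat) : Prop :=
  exists n, can_win_by e k 1 n.

(* G is strong k-cop-win: k-cop-win and lim_{m->oo} capt_k(G,m) exists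
   (a limit of a nat sequence: eventually constant) *)
Definition strong_cop_win (V : finType) (e : rel V) (k : nat) : Prop :=
  cop_win e k /\ exists L N, forall m, N <= m -> capt_is e k m L.

Definition Kbip (p q : nat) : rel ('I_p + 'I_q)%type :=
  fun x y => match x, y with
             | inl _, inr _ | inr _, inl _ => true
             | _, _ => false end.

Definition ceil_div (q p : nat) : nat := (q + p.-1) %/ p.
Arguments Kbip : clear implicits.

From mathcomp Require Import all_boot zify.
Set Implicit Arguments. Unset Strict Implicit. Unset Printing Implicit Defensive.

(* With enough robbers, some robber follows every possible walk, so capturing
   all of them within n rounds is the same as winning a sweeping game: the
   cops must shrink the contaminated set R (the vertices a robber may occupy),
   which after a cop move to C becomes the set of vertices off C reachable in
   one step from R minus C.  In K_{p,q} fewer than p cops always leave a free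
   vertex on each side, so R never shrinks.  With p cops the number of cleared
   vertices on each side grows by at most p every two rounds, which forces
   2 ceil(q/p) - 2 rounds when p < q; alternately occupying the whole side of
   size p and the next block of p vertices on the other side achieves this. *)

Section SweepGame.
Variables (V : finType) (e : rel V).

Definition spread (C R : {set V}) : {set V} :=
  [set v | (v \notin C) && [exists u, [&& u \in R, u \notin C & step e u v]]].

Lemma card_preim_spread (I : finType) (f : I -> V) (C R : {set V}) :
  #|f @^-1: ~: spread C R| <= #|f @^-1: ~: R| + #|f @^-1: C|.
Proof.
apply: leq_trans (leq_card_setU _ _); apply/subset_leq_card/subsetP => i.
rewrite !inE; apply: contraR; rewrite negb_or negbK => /andP[Ri Ci].
by rewrite Ci; apply/existsP; exists (f i); rewrite Ri Ci /step eqxx.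
Qed.

Lemma card_preim_spread_from (I : finType) (f : I -> V) (C R : {set V}) u :
  u \in R -> u \notin C -> (forall i, step e u (f i)) ->
  #|f @^-1: ~: spread C R| <= #|f @^-1: C|.
Proof.
move=> Ru Cu uf; apply/subset_leq_card/subsetP => i; rewrite !inE.
by apply: contraR => Ci; rewrite Ci; apply/existsP; exists u; rewrite Ru Cu uf.
Qed.

Variable k : nat.

Definition copset (c : copsT V k) : {set V} := [set c i | i in 'I_k].

Lemma mem_copset c v : (v \in copset c) = [exists i, c i == v].
Proof. by apply/imsetP/existsP => [[i _ ->]|[i /eqP <-]]; exists i. Qed.

Lemma card_copset c : #|copset c| <= k.
Proof. by rewrite (leq_trans (leq_imset_card _ _)) // card_ord. Qed.

Lemma setC_copset_neq0 c : k < #|V| -> ~: copset c != set0.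
Proof.
by rewrite -card_gt0; have := cardsC (copset c); have := card_copset c; lia.
Qed.

Lemma capture_Some m (c : copsT V k) (r : robsT V m) j v :
  capture c r j = Some v -> r j = Some v.
Proof. by rewrite ffunE; case: (r j) => // u; case: ifP => // _ [->]. Qed.

Lemma capture_free m (c : copsT V k) (r : robsT V m) j v :
  r j = Some v -> v \notin copset c -> capture c r j = Some v.
Proof. by move=> rj; rewrite mem_copset ffunE rj => /negbTE ->. Qed.

Fixpoint sweep (n : nat) (c : copsT V k) (R : {set V}) : Prop :=
  match n with
  | 0 => R = set0
  | n'.+1 => exists c', cops_move e c c' /\ sweep n' c' (spread (copset c') R)
  end.

(* A cop stepping inside an independent set P stays on the same vertex, so
   each cop accounts for at most one vertex of P occupied before or after. *)
Lemma card_independent_copsets (P : {set V}) c c' :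
  {in P &, forall x y, ~~ e x y} -> cops_move e c c' ->
  #|P :&: (copset c :|: copset c')| <= k.
Proof.
move=> indepP move_cc'.
pose g i := if c' i \in P then c' i else c i.
apply: leq_trans (card_copset [ffun i => g i]); apply/subset_leq_card/subsetP.
move=> v; rewrite !inE !mem_copset => /andP[Pv /orP[]] /existsP[i /eqP civ];
  apply/existsP; exists i; rewrite ffunE /g.
- case: ifPn => [Pc'|]; last by rewrite civ.
  have := move_cc' i; rewrite /step civ (negbTE (indepP _ _ Pv Pc')) orbF.
  by move=> /eqP ->.
- by rewrite civ Pv.
Qed.

Lemma exists_free_independent (P : {set V}) c c' :
  {in P &, forall x y, ~~ e x y} -> cops_move e c c' -> k < #|P| ->
  exists2 v, v \in P & v \notin copset c :|: copset c'.
Proof.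
move=> indepP move_cc' ltkP; apply/subsetPn; apply: contraTN ltkP => sub.
rewrite -leqNgt; apply: leq_trans (card_independent_copsets indepP move_cc').
by rewrite (setIidPl sub).
Qed.

(* [plan j i] is the vertex robber j heads for in round i. *)
Section RobberPlans.
Variables (m : nat) (plan : 'I_m -> nat -> V).

Definition follow_plan t (c : copsT V k) (r : robsT V m) : robsT V m :=
  [ffun j => match r j with
    | Some u => if step e u (plan j t.+1) && (plan j t.+1 \notin copset c)
                then Some (plan j t.+1) else Some u
    | None => None end].

Lemma robs_move_follow_plan t c r : robs_move e r (follow_plan t c r).
Proof.
move=> j; rewrite ffunE; case: (r j) => [u|] //.
by case: ifP => [/andP[]|] //; rewrite /step eqxx.
Qed.

Definition plans_cover n t (R : {set V}) (r : robsT V m) :=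
  forall v, v \in R -> forall s : nat -> V,
    exists j, r j = Some v /\ forall i, t < i <= t + n -> plan j i = s i.

Lemma sweep_of_win n t c R r : plans_cover n t R r -> win e n c r -> sweep n c R.
Proof.
elim: n t c R r => [|n IH] t c R r cover /=.
  move=> captured; apply/setP => v; rewrite inE; apply/negP => Rv.
  by have [j [+ _]] := cover v Rv (fun _ => v); rewrite captured.
move=> [c' [move_cc' win_c']]; exists c'; split=> //.
apply: (IH t.+1) (win_c' _ (robs_move_follow_plan t c' _)).
move=> v; rewrite inE => /andP[C'v /existsP[u /and3P[Ru C'u uv]]] s.
have [j [rj plan_j]] := cover u Ru (fun i => if i == t.+1 then v else s i).
have plan_jt : plan j t.+1 = v by rewrite plan_j ?eqxx //; lia.
exists j; split.
  have moved : follow_plan t c' (capture c' r) j = Some v.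
    by rewrite ffunE (capture_free rj C'u) plan_jt uv C'v.
  exact: capture_free moved C'v.
by move=> i lti; rewrite plan_j; [case: eqP => // ?; lia | lia].
Qed.

End RobberPlans.

Lemma exists_covering_plans (v0 : V) m n : #|V| ^ n.+1 <= m ->
  exists plan : 'I_m -> nat -> V,
    forall s, exists j, forall i, i <= n -> plan j i = s i.
Proof.
move=> leVm; pose W := {ffun 'I_n.+1 -> V}.
exists (fun j i => nth [ffun=> v0] (enum W) j (inord i)) => s.
pose w : W := [ffun i : 'I_n.+1 => s i].
have lt_w_m : index w (enum W) < m.
  have cardW : #|W| = #|V| ^ n.+1 by rewrite card_ffun card_ord.
  by apply: leq_trans leVm; rewrite -cardW cardE index_mem mem_enum.
exists (Ordinal lt_w_m) => i le_in /=.
by rewrite nth_index ?mem_enum // ffunE inordK.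
Qed.

Lemma sweep_of_can_win_by (v0 : V) m n : #|V| ^ n.+1 <= m ->
  can_win_by e k m n -> exists c0, sweep n c0 (~: copset c0).
Proof.
move=> leVm [c0 win_c0]; have [plan cover] := exists_covering_plans v0 leVm.
exists c0; apply: (@sweep_of_win m plan n 0 _ _ _ _ (win_c0 [ffun j => plan j 0])).
move=> v; rewrite inE => C0v s.
have [j plan_j] := cover (fun i => if i == 0 then v else s i).
exists j; split; first by apply: capture_free C0v; rewrite !ffunE plan_j.
by move=> i lti; rewrite plan_j; [case: eqP => //; lia | lia].
Qed.

Lemma capt_is_of_sweep (v0 : V) m T : can_win_by e k m T ->
  (forall n c, sweep n c (~: copset c) -> T <= n) -> #|V| ^ T <= m ->
  capt_is e k m T.
Proof.
move=> win_T sweep_ge leVm; split=> // n win_n.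
case: (leqP T n) => // ltnT.
have leVm' : #|V| ^ n.+1 <= m.
  by apply: leq_trans leVm; rewrite leq_pexp2l //; apply/card_gt0P; exists v0.
by have [c0 /sweep_ge] := sweep_of_can_win_by v0 leVm' win_n; rewrite leqNgt ltnT.
Qed.

End SweepGame.

Lemma card_preim_sum (I1 I2 : finType) (S : {set I1 + I2}) :
  #|S| = #|inl @^-1: S| + #|inr @^-1: S|.
Proof.
rewrite -!sum1_card big_sumType.
by congr (_ + _); apply: eq_bigl => i; rewrite inE.
Qed.

Lemma leq_ceil_div p q n : 0 < p -> (ceil_div q p <= n) = (q <= n * p).
Proof. by move=> p_gt0; rewrite /ceil_div -ltnS ltn_divLR //; lia. Qed.

Section KbipSweep.
Variables (p q : nat).
Hypothesis leq_pq : p <= q.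
Local Notation V := ('I_p + 'I_q)%type.
Local Notation e := (Kbip p q).
Local Notation nA S := #|@inl 'I_p 'I_q @^-1: S|.
Local Notation nB S := #|@inr 'I_p 'I_q @^-1: S|.

Lemma card_preim_inl_setC (S : {set V}) : nA S + nA (~: S) = p.
Proof. by rewrite preimsetC cardsC card_ord. Qed.

Lemma card_preim_inr_setC (S : {set V}) : nB S + nB (~: S) = q.
Proof. by rewrite preimsetC cardsC card_ord. Qed.

Lemma Kbip_no_sweep k n (c : copsT V k) : k < p -> ~ sweep e n c (~: copset c).
Proof.
move=> ltkp; elim: n c => [|n IH] c /=.
  by move=> /eqP; apply/negP/setC_copset_neq0; rewrite card_sum !card_ord; lia.
move=> [c' [move_cc' sweep_c']]; apply: (IH c'); congr (sweep _ _ _): sweep_c'.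
have [_ /imsetP[a _ ->]] :
    exists2 v, v \in [set inl a | a in 'I_p] & v \notin copset c :|: copset c'.
  apply: (exists_free_independent _ move_cc').
    by move=> _ _ /imsetP[? _ ->] /imsetP[? _ ->].
  by rewrite card_imset ?card_ord // => ? ? [].
rewrite inE negb_or => /andP[ca ca'].
have [_ /imsetP[b _ ->]] :
    exists2 v, v \in [set inr b | b in 'I_q] & v \notin copset c :|: copset c'.
  apply: (exists_free_independent _ move_cc').
    by move=> _ _ /imsetP[? _ ->] /imsetP[? _ ->].
  by rewrite card_imset ?card_ord //; [lia | move=> ? ? []].
rewrite inE negb_or => /andP[cb cb'].
apply/setP => v; rewrite !inE; case: (boolP (v \in copset c')) => //= c'v.
apply/existsP; case: v c'v => [x|y] _; [exists (inr b) | exists (inl a)];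
  by rewrite !inE ?cb ?cb' ?ca ?ca' /step orbT.
Qed.

(* A contaminated cop-free vertex on one side contaminates every cop-free
   vertex of the other side. *)
Lemma cleared_step (C R : {set V}) M S : #|C| <= p -> p <= S ->
  nA (~: R) <= M -> nB (~: R) <= M -> nA (~: R) + nB (~: R) <= S ->
  ~~ (R \subset C) ->
  let R' := spread e C R in
  [/\ nA (~: R') <= S, nB (~: R') <= S & nA (~: R') + nB (~: R') <= M + p].
Proof.
move=> leCp leS xM yM xyS /subsetPn[v Rv Cv] R'.
have cardC : #|C| = nA C + nB C := card_preim_sum C.
have cardRA := card_preim_inl_setC R; have cardRB := card_preim_inr_setC R.
have x'_le : nA (~: R') <= nA (~: R) + nA C := card_preim_spread e inl C R.
have y'_le : nB (~: R') <= nB (~: R) + nB C := card_preim_spread e inr C R.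
have fromB b : inr b \in R -> inr b \notin C -> nA (~: R') <= nA C.
  by move=> Rb Cb; apply: card_preim_spread_from Rb Cb _ => a; rewrite /step orbT.
have fromA a : inl a \in R -> inl a \notin C -> nB (~: R') <= nB C.
  by move=> Ra Ca; apply: card_preim_spread_from Ra Ca _ => b; rewrite /step orbT.
have coveredB : ~~ [exists b, (inr b \in R) && (inr b \notin C)] -> nB R <= nB C.
  move=> noB; apply/subset_leq_card/subsetP => b; rewrite !inE => Rb.
  by apply: contraR noB => Cb; apply/existsP; exists b; rewrite Rb.
have coveredA : ~~ [exists a, (inl a \in R) && (inl a \notin C)] -> nA R <= nA C.
  move=> noA; apply/subset_leq_card/subsetP => a; rewrite !inE => Ra.
  by apply: contraR noA => Ca; apply/existsP; exists a; rewrite Ra.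
case: v Rv Cv => [a|b] Rv Cv.
- have y'_C := fromA a Rv Cv.
  have [/existsP[b /andP[Rb Cb]]|/coveredB RB_C] :=
    boolP [exists b, (inr b \in R) && (inr b \notin C)].
    by have x'_C := fromB b Rb Cb; split; lia.
  by split; lia.
- have x'_C := fromB b Rv Cv.
  have [/existsP[a /andP[Ra Ca]]|/coveredA RA_C] :=
    boolP [exists a, (inl a \in R) && (inl a \notin C)].
    by have y'_C := fromA a Ra Ca; split; lia.
  by split; lia.
Qed.

Definition cleared_within t (R : {set V}) :=
  [/\ nA (~: R) <= p * (t./2).+1, nB (~: R) <= p * (t./2).+1
    & nA (~: R) + nB (~: R) <= p * (uphalf t).+1].

Lemma sweep_cleared_bound n t (c : copsT V p) R :
  R != set0 -> cleared_within t R -> sweep e n c R -> q <= p * ((t + n)./2).+1.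
Proof.
elim: n t c R => [|n IH] t c R R_neq0 [xM yM xyS] /=.
  by move=> R0; rewrite R0 eqxx in R_neq0.
move=> [c' [_ sweep_c']].
have leCp : #|copset c'| <= p := card_copset c'.
have [RC|notRC] := boolP (R \subset copset c').
  have cardR : #|R| = nA R + nB R := card_preim_sum R.
  have leRC : #|R| <= #|copset c'| := subset_leq_card RC.
  have le_tn : p * (uphalf t).+1 <= p * ((t + n.+1)./2).+1.
    by rewrite leq_mul2l ltnS (@half_leq t.+1) ?orbT //; lia.
  by have := card_preim_inl_setC R; have := card_preim_inr_setC R; lia.
have [x' y' xy'] := cleared_step leCp (leq_pmulr _ (ltn0Sn _)) xM yM xyS notRC.
have R'_neq0 : spread e (copset c') R != set0.
  have [v Rv Cv] := subsetPn notRC; apply/set0Pn; exists v.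
  by rewrite inE Cv; apply/existsP; exists v; rewrite Rv Cv /step eqxx.
case: n IH sweep_c' => [|n] IH sweep_c'; first by rewrite sweep_c' eqxx in R'_neq0.
rewrite -addSnnS; apply: (IH t.+1 c' _ R'_neq0 _ sweep_c').
by split=> //; apply: leq_trans xy' _; rewrite /= !mulnS; lia.
Qed.

Lemma Kbip_capt_lower n (c : copsT V p) : 0 < p ->
  sweep e n c (~: copset c) -> (if p < q then 2 * ceil_div q p - 2 else 1) <= n.
Proof.
move=> p_gt0 sweep_c.
have ne0 : ~: copset c != set0.
  by apply: setC_copset_neq0; rewrite card_sum !card_ord; lia.
case: n sweep_c => [/= C0|n sweep_c]; first by rewrite C0 eqxx in ne0.
case: ifP => // ltpq.
have cardC : #|copset c| = nA (copset c) + nB (copset c) := card_preim_sum _.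
have leCp : #|copset c| <= p := card_copset c.
have cleared0 : cleared_within 0 (~: copset c).
  rewrite /cleared_within /= muln1 setCK -cardC.
  by split=> //; apply: leq_trans leCp; rewrite cardC ?leq_addr ?leq_addl.
have := sweep_cleared_bound ne0 cleared0 sweep_c.
rewrite mulnC -leq_ceil_div // => le_r.
have : n.+1./2.*2 <= n.+1 by rewrite -geq_half_double.
lia.
Qed.

End KbipSweep.

(* [cops_B j] occupies the j-th block of p vertices of 'I_q; positions beyond
   q are clamped to q0. *)
Section KbipStrategy.
Variables (p q m : nat) (q0 : 'I_q).
Local Notation V := ('I_p + 'I_q)%type.
Local Notation e := (Kbip p q).

Definition cops_A : copsT V p := [ffun i : 'I_p => inl i].
Definition cops_B j : copsT V p := [ffun i : 'I_p => inr (insubd q0 (j * p + i))].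

Definition robbers_on_B_from j (r : robsT V m) := forall x v, r x = Some v ->
  if v is inr b then j * p <= b else False.
Definition robbers_on_A_or_B_from j (r : robsT V m) := forall x v, r x = Some v ->
  if v is inr b then j * p <= b else True.

Lemma cops_move_A_B j : cops_move e cops_A (cops_B j).
Proof. by move=> i; rewrite !ffunE /step orbT. Qed.

Lemma cops_move_B_A j : cops_move e (cops_B j) cops_A.
Proof. by move=> i; rewrite !ffunE /step orbT. Qed.

Lemma capture_cops_A (r : robsT V m) x :
  capture cops_A r x = if r x is Some (inl _) then None else r x.
Proof.
rewrite ffunE; case: (r x) => [[a|b]|] //; case: existsP => //.
- by case; exists a; rewrite ffunE.
- by case=> i; rewrite ffunE.
Qed.

Lemma capture_cops_B j (r : robsT V m) x (b : 'I_q) : r x = Some (inr b) ->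
  j * p <= b < j * p + p -> capture (cops_B j) r x = None.
Proof.
move=> rx jb; rewrite ffunE rx; case: existsP => // -[].
have lt_bp : b - j * p < p by lia.
exists (Ordinal lt_bp); rewrite ffunE; apply/eqP; congr inr; apply: val_inj.
by rewrite val_insubd /= subnKC ?ltn_ord //; lia.
Qed.

(* Robbers on 'I_q cannot move within that side, and moving to 'I_p while the
   cops occupy it means capture. *)
Lemma robbers_after_A j (r r' : robsT V m) : robbers_on_A_or_B_from j r ->
  robs_move e (capture cops_A r) r' -> robbers_on_B_from j (capture cops_A r').
Proof.
move=> from_j move_r x v; rewrite capture_cops_A; have := move_r x.
rewrite capture_cops_A; case rx: (r x) => [[a|b]|] //=; try by case: (r' x).
have := from_j x _ rx; case: (r' x) => [[a'|b']|] //= le_jb step_bb' [<-].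
by move: step_bb'; rewrite /step orbF => /eqP[<-].
Qed.

Lemma robbers_after_B j (r r' : robsT V m) : robbers_on_B_from j r ->
  robs_move e (capture (cops_B j) r) r' ->
  robbers_on_A_or_B_from j.+1 (capture (cops_B j) r').
Proof.
move=> from_j move_r x v /capture_Some r'x; have := move_r x; rewrite r'x.
case cx: (capture (cops_B j) r x) => [[a|b]|] //; have rx := capture_Some cx;
  move: (from_j _ _ rx) => //= le_jb.
have le_j1b : j.+1 * p <= b.
  rewrite mulSn leqNgt; apply/negP => ltb.
  by move: cx; rewrite (capture_cops_B rx) //; lia.
case: v r'x => [a'|b'] _ //=.
by rewrite /step orbF => /eqP[<-].
Qed.

Lemma robbers_after_last_B j (r r' : robsT V m) : robbers_on_B_from j r ->
  q <= j * p + p -> robs_move e (capture (cops_B j) r) r' ->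
  all_captured (capture (cops_B j) r').
Proof.
move=> from_j le_q move_r.
have captured x : capture (cops_B j) r x = None.
  case rx: (r x) => [u|]; last by rewrite ffunE rx.
  have := from_j _ _ rx; case: u rx => [a|b] rx //= le_jb.
  by apply: capture_cops_B rx _; have := ltn_ord b; lia.
by move=> x; have := move_r x; rewrite captured ffunE; case: (r' x).
Qed.

Lemma win_from_A h j (r : robsT V m) : robbers_on_B_from j r ->
  q <= (j + h).+1 * p -> win e (2 * h).+1 cops_A r.
Proof.
elim: h j r => [|h IH] j r from_j le_q.
  exists (cops_B j); split; first exact: cops_move_A_B.
  move=> r'; apply: robbers_after_last_B from_j _.
  by move: le_q; rewrite addn0 mulSn; lia.
rewrite mulnS; exists (cops_B j); split; first exact: cops_move_A_B.
move=> r1 move_r1; exists cops_A; split; first exact: cops_move_B_A.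
move=> r2 move_r2.
have from_j1 := robbers_after_A (robbers_after_B from_j move_r1) move_r2.
by apply: IH from_j1 _; rewrite addSnnS.
Qed.

Lemma Kbip_capt_upper : 0 < p ->
  can_win_by e p m (if p < q then 2 * ceil_div q p - 2 else 1).
Proof.
move=> p_gt0; case: ifP => [ltpq|]; last first.
  move=> /negbT; rewrite -leqNgt => leqp; exists cops_A => r0.
  exists (cops_B 0); split; first exact: cops_move_A_B.
  move=> r' move_r'; apply: robbers_after_last_B _ _ move_r'; last lia.
  by move=> x v; rewrite capture_cops_A ffunE; case: (r0 x) => [a|b] //= [<-].
set r := ceil_div q p.
have r_ge2 : 1 < r by rewrite ltnNge leq_ceil_div //; lia.
have le_qr : q <= r * p by rewrite -leq_ceil_div.
exists (cops_B 0) => r0.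
have from_1 :
    robbers_on_A_or_B_from 1 (capture (cops_B 0) [ffun j => Some (r0 j)]).
  move=> x [a|b] //= cx; rewrite mul1n leqNgt; apply/negP => ltbp.
  by have rx := capture_Some cx; move: cx; rewrite (capture_cops_B rx) //; lia.
have -> : 2 * r - 2 = (2 * (r - 2)).+2 by lia.
exists cops_A; split; first exact: cops_move_B_A.
move=> r' move_r'; apply: win_from_A (robbers_after_A from_1 move_r') _.
by have -> : (1 + (r - 2)).+1 = r by lia.
Qed.

End KbipStrategy.

Theorem mainTheorem17 (p q : nat) :
  1 <= p -> p <= q ->
  strong_cop_win (Kbip p q) p /\
  (forall k, 1 <= k <= p.-1 -> ~ strong_cop_win (Kbip p q) k) /\
  (exists N, forall m, N <= m ->
     capt_is (Kbip p q) p m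
       (if p < q then 2 * ceil_div q p - 2 else 1)).
Proof.
move=> p_gt0 leq_pq; set T := if p < q then _ else _.
pose v0 : ('I_p + 'I_q)%type := inl (Ordinal p_gt0).
pose q0 : 'I_q := Ordinal (leq_trans p_gt0 leq_pq).
have upper m : can_win_by (Kbip p q) p m T := Kbip_capt_upper m q0 p_gt0.
have capt : exists N, forall m, N <= m -> capt_is (Kbip p q) p m T.
  exists (#|{: 'I_p + 'I_q}| ^ T) => m leVm.
  by apply: (capt_is_of_sweep v0 (upper m) _ leVm) => n c; apply: Kbip_capt_lower.
split; [|split] => //.
  by split; [exists T | have [N capt_N] := capt; exists T, N].
move=> k /andP[k_gt0 ltkp] [_ [L [N capt_L]]].
have [win_L _] := capt_L (N + #|{: 'I_p + 'I_q}| ^ L.+1) (leq_addr _ _).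
have [c0 sweep_c0] := sweep_of_can_win_by v0 (leq_addl _ _) win_L.
by apply: Kbip_no_sweep sweep_c0; lia.
Qed.
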